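(* For every integer $n \geq 1$, the number of edges of the finite linear Jaco graph $J_n(x)$ is $$\varepsilon(J_n(x)) \;=\; \sum_{i=1}^{n} \left\lfloor \frac{2(i+1)}{3+\sqrt{5}} \right\rfloor .$$ (Equivalently, the sequence $(\varepsilon(J_n(x)))_{n\ge 1}$ is OEIS sequence A183137 with its $n=0$ term omitted.)
   Context: The finite linear Jaco graph $J_n(x)$ is the simple undirected graph on the vertex set $\{v_1,\dots,v_n\}$ defined as follows. $J_1(x)$ is the single vertex $v_1$. $J_2(x)$ is the single edge $v_1v_2$. For $n \geq 3$, start from the graph on $\{v_1,\dots,v_n\}$ with exactly the two edges $v_1v_2$ and $v_2v_3$. Then, for $i = 3,4,\dots,n-1$ in increasing order, let $d_i$ be the current degree of $v_i$ and add the edges $v_iv_{i+1}, v_iv_{i+2},\dots,v_iv_{i+t}$, where $t$ is the largest integer with $i+t \le n$ such that after adding these edges the degree of $v_i$ is at most $i$ (that is, $t=\max(0,\min(i-d_i,\,n-i))$). The graph obtained after step $i=n-1$ is $J_n(x)$. $\varepsilon(G)$ denotes the number of edges of a graph $G$. *)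

From mathcomp Require Import all_boot all_order all_algebra.
From mathcomp Require Export reals.
Set Implicit Arguments. Unset Strict Implicit. Unset Printing Implicit Defensive.

(* Graphs on vertices v_1..v_n are encoded by edge lists of pairs (a, b)
   with a < b, standing for the edge v_a v_b. *)

Definition jaco_deg (E : seq (nat * nat)) (i : nat) : nat :=
  count (fun e => (e.1 == i) || (e.2 == i)) E.

(* step i: add v_i v_{i+1}, ..., v_i v_{i+t}, t = max(0, min(i - d_i, n - i))
   (truncated subtraction on nat realises the max(0, _)). *)
Definition jaco_step (n : nat) (E : seq (nat * nat)) (i : nat) : seq (nat * nat) :=
  E ++ [seq (i, i + k) | k <- iota 1 (minn (i - jaco_deg E i) (n - i))].

Definition jaco_edges (n : nat) : seq (nat * nat) :=
  if n <= 1 then [::]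
  else if n == 2 then [:: (1, 2)]
  else foldl (jaco_step n) [:: (1, 2); (2, 3)] (iota 3 (n - 3)).

Definition jaco_num_edges (n : nat) : nat := size (undup (jaco_edges n)).

From mathcomp Require Import all_boot all_order all_algebra.
From mathcomp Require Import reals.
Import Order.TTheory GRing.Theory Num.Theory.
From mathcomp Require Import zify ring lra.

(* Let x = (sqrt 5 - 1)/2, the root of x (1 + x) = 1, and g i = floor ((i+1) x).
   Since x is irrational, x (1 + x) = 1 yields j + g j < i <-> j < g i.  Hence,
   if every v_j with j < i was given g j forward edges, v_i has received edges
   from exactly the v_j with g i <= j < i, i.e. its degree is i - g i, and the
   construction gives it min (g i, n - i) forward edges in turn.  Counting each
   edge at its larger endpoint, J_n(x) has sum_(i <= n) (i - g i) edges, and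
   2 (i+1) / (3 + sqrt 5) = (i+1) (1 - x) has floor i - g i. *)

Section ForwardDegrees.

Variable g : nat -> nat.

Definition jaco_out (n j : nat) : seq (nat * nat) :=
  [seq (j, j + k) | k <- iota 1 (minn (g j) (n - j))].

Fixpoint jaco_upto (n m : nat) : seq (nat * nat) :=
  if m is m'.+1 then jaco_upto n m' ++ jaco_out n m else [::].

Lemma jaco_deg_out n j i : j < i <= n -> jaco_deg (jaco_out n j) i = (i <= j + g j).
Proof.
move=> /andP[lt_ji le_in]; rewrite /jaco_deg count_map.
rewrite (@eq_in_count _ _ (pred1 (i - j))); last first.
  by move=> k _ /=; apply/orP/eqP => [[] /eqP|]; lia.
rewrite count_uniq_mem ?iota_uniq // mem_iota.
by congr (nat_of_bool _); apply/idP/idP; lia.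
Qed.

Lemma jaco_deg_upto n m i : m < i <= n ->
  jaco_deg (jaco_upto n m) i = \sum_(1 <= j < m.+1) (i <= j + g j).
Proof.
elim: m => [|m IHm] lt_mi; first by rewrite big_geq.
rewrite /jaco_deg count_cat -!/(jaco_deg _ _) IHm; last by move: lt_mi; clear; lia.
rewrite jaco_deg_out; last by move: lt_mi; clear; lia.
by rewrite [in RHS]big_nat_recr.
Qed.

Lemma jaco_upto_fst n m e : e \in jaco_upto n m -> e.1 <= m.
Proof.
elim: m => [|m IHm] //=; rewrite mem_cat => /orP[/IHm/leqW //|].
by move=> /mapP[k _ ->].
Qed.

Lemma uniq_jaco_upto n m : uniq (jaco_upto n m).
Proof.
elim: m => [|m IHm] //=; rewrite cat_uniq IHm /=; apply/andP; split.
  by apply/hasPn => _ /mapP[k _ ->]; apply/negP => /jaco_upto_fst /=; lia.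
by rewrite map_inj_uniq ?iota_uniq // => k1 k2 [] /addnI.
Qed.

Lemma size_jaco_upto n m :
  size (jaco_upto n m) = \sum_(1 <= i < m.+1) minn (g i) (n - i).
Proof.
elim: m => [|m IHm]; first by rewrite big_geq.
by rewrite /= size_cat IHm size_map size_iota [in RHS]big_nat_recr.
Qed.

Hypothesis g_bounds : forall i, 0 < i -> 0 < g i <= i.
Hypothesis g_reach : forall j i, 0 < j -> 0 < i -> (j + g j < i) = (j < g i).

Lemma in_degree i : 0 < i -> \sum_(1 <= j < i) (i <= j + g j) = i - g i.
Proof.
move=> i_gt0; have /andP[gi_gt0 gi_le] := g_bounds _ i_gt0.
rewrite (big_cat_nat (n := g i)) //= big1_seq ?add0n; last first.
  move=> j /andP[_]; rewrite mem_index_iota => /andP[j_gt0 lt_jg].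
  by rewrite leqNgt g_reach // lt_jg.
rewrite (eq_big_seq (fun _ => 1)) ?sum_nat_const_nat ?muln1 //.
move=> j; rewrite mem_index_iota => /andP[le_gj lt_ji].
by rewrite leqNgt g_reach ?ltnNge ?le_gj //; lia.
Qed.

Lemma jaco_step_upto n m : m < n ->
  jaco_step n (jaco_upto n m) m.+1 = jaco_upto n m.+1.
Proof.
move=> lt_mn; rewrite /jaco_step jaco_deg_upto ?leqnn ?lt_mn // in_degree //.
by have /andP[_ gm_le] := g_bounds _ (ltn0Sn m); rewrite subKn.
Qed.

Lemma foldl_jaco_step_upto n a m : a + m <= n ->
  foldl (jaco_step n) (jaco_upto n a) (iota a.+1 m) = jaco_upto n (a + m).
Proof.
elim: m a => [|m IHm] a le_n; first by rewrite addn0.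
by rewrite /= jaco_step_upto ?IHm ?addSnnS //; lia.
Qed.

Lemma jaco_edges_upto n : 1 < n -> jaco_edges n = jaco_upto n n.-1.
Proof.
move=> n_gt1.
have g1 : g 1 = 1 by have := g_bounds _ (ltn0Sn 0); lia.
have g2 : g 2 = 1.
  by have := g_reach 1 2 isT isT; have := g_bounds _ (ltn0Sn 1); rewrite g1; lia.
rewrite /jaco_edges leqNgt n_gt1 /=; case: eqP => [-> | /eqP n_neq2].
  by rewrite /= /jaco_out g1.
have -> : [:: (1, 2); (2, 3)] = jaco_upto n 2.
  by rewrite /= /jaco_out g1 g2 (minn_idPl _) ?(minn_idPl _) //; lia.
by rewrite foldl_jaco_step_upto; [congr jaco_upto|]; lia.
Qed.

Lemma sum_forward_edges n : 0 < n ->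
  \sum_(1 <= i < n) minn (g i) (n - i) = \sum_(1 <= i < n.+1) (i - g i).
Proof.
elim: n => [//|n IHn] _; case: (posnP n) => [-> | n_gt0].
  by rewrite big_geq // big_nat1; have := g_bounds _ (ltn0Sn 0); lia.
rewrite big_nat_recr //= [in RHS]big_nat_recr //= -IHn //.
rewrite (@eq_big_nat _ _ _ _ _ _ (fun i => minn (g i) (n - i) + (n.+1 <= i + g i)));
  last by move=> i /andP[_ lt_in]; case: leqP; lia.
rewrite big_split /= -addnA; congr (_ + _).
have := in_degree _ (ltn0Sn n); rewrite big_nat_recr //=.
by have := g_bounds _ n_gt0; have := g_bounds _ (ltn0Sn n); lia.
Qed.

Lemma jaco_num_edges_sum n : 0 < n ->
  jaco_num_edges n = \sum_(1 <= i < n.+1) (i - g i).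
Proof.
move=> n_gt0; rewrite -sum_forward_edges //; case: (ltnP 1 n) => [n_gt1 | n_le1].
  rewrite /jaco_num_edges jaco_edges_upto // undup_id ?uniq_jaco_upto //.
  by rewrite size_jaco_upto prednK.
by rewrite /jaco_num_edges /jaco_edges n_le1 big_geq.
Qed.

End ForwardDegrees.

Local Open Scope ring_scope.

Section FloorMultiples.

Variables (R : archiRealFieldType) (x : R).
Hypothesis x_gt0 : 0 < x.
Hypothesis x_quad : x * (1 + x) = 1.
Hypothesis x_irr : forall (k : nat) (z : int), (0 < k)%N -> k%:R * x != z%:~R.

Lemma mulr_lt_subr (a b : R) : (a * x < b - a) = (a < b * x).
Proof.
rewrite ltrBrDr addrC -{1}(mulr1 a) -mulrDr -(ltr_pM2r x_gt0) -mulrA.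
by rewrite [(1 + x) * x]mulrC x_quad mulr1.
Qed.

Lemma floor_mul_reach (p q : nat) : (0 < q)%N ->
  (p%:Z + Num.floor (p%:R * x) < q%:Z) = (p%:Z <= Num.floor (q%:R * x)).
Proof.
move=> q_gt0; rewrite addrC -ltrBrDr floor_lt_int floor_ge_int.
rewrite rmorphB /= mulr_lt_subr [RHS]le_eqVlt eq_sym.
by rewrite (negbTE (x_irr q p q_gt0)).
Qed.

Lemma floor_mul_bounds (k : nat) : (1 < k)%N ->
  (1 <= Num.floor (k%:R * x)) && (Num.floor (k%:R * x) < k%:Z).
Proof.
move=> k_gt1; rewrite floor_ge_int floor_lt_int.
have k_ge2 : 2 <= k%:R :> R by rewrite (ler_nat R 2).
(* nra does not look at section hypotheses *)
have := x_quad; have := x_gt0 => x_pos x_root.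
have x_lt1 : x < 1 by nra.
have x_ge_half : 1 <= 2 * x by nra.
by rewrite -[1%:~R]/(1 : R) -[(k%:Z)%:~R]/(k%:R : R); apply/andP; split; nra.
Qed.

Lemma floor_sub_mul (k : nat) : (0 < k)%N ->
  Num.floor (k%:R - k%:R * x) = k%:Z - 1 - Num.floor (k%:R * x).
Proof.
move=> k_gt0; apply: floor_def.
have /andP[fl fu] := floor_itv (k%:R * x).
have fs : (Num.floor (k%:R * x))%:~R < k%:R * x.
  by rewrite lt_neqAle fl andbT eq_sym x_irr.
move: fl fu fs; rewrite !(intrD, intrB) /=.
set f := (Num.floor _)%:~R; rewrite -!pmulrn => *.
apply/andP; split; lra.
Qed.

Definition forward_deg (i : nat) : nat := `|Num.floor (i.+1%:R * x)|%N.

Lemma forward_deg_int i : (0 < i)%N -> (forward_deg i)%:Z = Num.floor (i.+1%:R * x).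
Proof.
move=> i_gt0; have /andP[f_ge1 _] := floor_mul_bounds i.+1 (i_gt0 : (1 < i.+1)%N).
by rewrite gez0_abs // (le_trans _ f_ge1).
Qed.

Lemma forward_deg_bounds i : (0 < i)%N -> (0 < forward_deg i <= i)%N.
Proof.
move=> i_gt0; have := floor_mul_bounds i.+1 i_gt0.
rewrite -forward_deg_int //; lia.
Qed.

Lemma forward_deg_reach j i : (0 < j)%N -> (0 < i)%N ->
  (j + forward_deg j < i)%N = (j < forward_deg i)%N.
Proof.
move=> j_gt0 i_gt0; have := floor_mul_reach j.+1 i.+1 (ltn0Sn i).
by rewrite -!forward_deg_int // -PoszD ltz_nat lez_nat.
Qed.

End FloorMultiples.

Lemma sqr_neq_5sqr (p q : nat) : (0 < q)%N -> (p ^ 2 != 5 * q ^ 2)%N.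
Proof.
move=> q_gt0; apply/eqP => E; have [p0 | p_gt0] := posnP p.
  by move: E; rewrite p0; lia.
have := congr1 (logn 5) E.
by rewrite lognM ?expn_gt0 ?q_gt0 // !lognX (@logn_prime 5 5) //=; lia.
Qed.

Section GoldenConjugate.

Variable R : realType.

Definition golden_conj : R := (Num.sqrt 5 - 1) / 2.

Lemma sqr_sqrt5 : Num.sqrt 5 ^+ 2 = 5 :> R.
Proof. by rewrite sqr_sqrtr. Qed.

Lemma golden_conj_gt0 : 0 < golden_conj.
Proof. have := sqr_sqrt5; have := sqrtr_ge0 (5 : R); rewrite /golden_conj; nra. Qed.

Lemma golden_conj_quad : golden_conj * (1 + golden_conj) = 1.
Proof. have := sqr_sqrt5; rewrite /golden_conj => s5; nra. Qed.

Lemma golden_conj_irr (k : nat) (z : int) : (0 < k)%N -> k%:R * golden_conj != z%:~R.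
Proof.
move=> k_gt0; apply/eqP => kx_int.
have E : (2 * z%:~R + k%:R) ^+ 2 = 5 * k%:R ^+ 2 :> R.
  have s5 := sqr_sqrt5; rewrite -kx_int /golden_conj.
  by set s := Num.sqrt 5 in s5 *; rewrite -s5; field.
have : ((2 * z + k%:Z) ^+ 2)%:~R = (5 * k%:Z ^+ 2)%:~R :> R.
  by rewrite !(rmorphXn, rmorphD, rmorphM).
move=> /intr_inj/(congr1 absz); rewrite abszX abszM abszX /= => {}E.
by move: (sqr_neq_5sqr `|2 * z + k%:Z| _ k_gt0); rewrite E eqxx.
Qed.

Lemma golden_div (k : R) : 2 * k / (3 + Num.sqrt 5) = k - k * golden_conj.
Proof.
have s5 := sqr_sqrt5; have s0 := sqrtr_ge0 (5 : R); rewrite /golden_conj.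
set s := Num.sqrt 5 in s5 s0 *.
have s3 : 3 + s != 0 by rewrite lt0r_neq0 //; lra.
apply: (mulIf s3); rewrite divfK //.
have -> : (k - k * ((s - 1) / 2)) * (3 + s) = 2 * k + k * (5 - s ^+ 2) / 2 by field.
by rewrite s5 subrr mulr0 mul0r addr0.
Qed.

End GoldenConjugate.

Theorem proposition1 (R : realType) (n : nat) : (1 <= n)%N ->
  (jaco_num_edges n)%:Z =
  \sum_(1 <= i < n.+1)
     Num.floor ((2 * (i.+1)%:R) / (3 + Num.sqrt 5) : R).
Proof.
move=> n_gt0; set x := golden_conj R.
have x_gt0 : 0 < x := golden_conj_gt0 R.
have x_quad : x * (1 + x) = 1 := golden_conj_quad R.
have x_irr := @golden_conj_irr R.
rewrite (jaco_num_edges_sum _ (forward_deg_bounds _ _ x_gt0 x_quad)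
  (forward_deg_reach _ _ x_gt0 x_quad x_irr) _ n_gt0).
rewrite -natz natr_sum; apply: eq_big_nat => i /andP[i_gt0 _].
have /andP[_ fd_le] := forward_deg_bounds _ _ x_gt0 x_quad _ i_gt0.
rewrite golden_div -/x (floor_sub_mul _ _ x_irr) // -(forward_deg_int _ _ x_gt0 x_quad) //.
by rewrite natz; move: fd_le; clear; lia.
Qed.
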